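(* For every positive integer $m$, $\lim_{\theta\to0^+}L_{m+1}(\theta)\ge\lim_{\theta\to0^+}L_m(\theta)$.
   Context: $\lg$ denotes $\log_2$. For a positive integer $m$ and $0<\theta<1$, $$L_m(\theta)=\begin{cases}1+\lg m+\dfrac{\theta^{m/2}}{1-\theta^{m/2}}, & m=2^\beta \text{ for some integer } \beta\ge0,\\[2mm] 1+\lfloor\lg m\rfloor+\dfrac{\theta^{(2^{\lceil\lg m\rceil}-m)/2}}{1-\theta^{m/2}}, & \text{otherwise.}\end{cases}$$ *)

From HB Require Import structures.
From mathcomp Require Import all_boot all_order all_algebra.
From mathcomp Require Import all_classical all_reals all_analysis.
Set Implicit Arguments. Unset Strict Implicit. Unset Printing Implicit Defensive.
Import Order.TTheory GRing.Theory Num.Theory.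
Local Open Scope ring_scope.

Definition lg (R : realType) (x : R) : R := ln x / ln 2.

Definition L (R : realType) (m : nat) (theta : R) : R :=
  if `[< exists beta : nat, m = (2 ^ beta)%N >] then
    1 + lg (m%:R : R) + theta `^ (m%:R / 2) / (1 - theta `^ (m%:R / 2))
  else
    1 + (Num.floor (lg (m%:R : R)))%:~R
      + theta `^ (((2 : R) ^ Num.ceil (lg (m%:R : R)) - m%:R) / 2)
        / (1 - theta `^ (m%:R / 2)).

From HB Require Import structures.
From mathcomp Require Import all_boot all_order all_algebra.
From mathcomp Require Import all_classical all_reals all_analysis.
Import Order.TTheory GRing.Theory Num.Theory numFieldNormedType.Exports.
Local Open Scope classical_set_scope.
Local Open Scope ring_scope.

(* As theta -> 0+ the fractional term of L_m vanishes, so L_m tends to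
   1 + floor (lg m): when m is not a power of two, ceil (lg m) = floor (lg m) + 1
   and the exponent (2^ceil(lg m) - m) / 2 is positive.  Hence the limit is
   1 + trunc_log 2 m, which is monotone in m. *)

Section BinaryLogarithm.
Variable R : realType.

Lemma ln2_gt0 : 0 < ln (2 : R).
Proof. by apply: ln_gt0; rewrite ltr1n. Qed.

Lemma lg_exp2 (k : nat) : lg ((2 : R) ^+ k) = k%:R.
Proof. by rewrite /lg lnXn // -[ln _ *+ k]mulr_natl mulfK // gt_eqF // ln2_gt0. Qed.

Lemma ler_lg (x y : R) : 0 < x -> 0 < y -> (lg x <= lg y) = (x <= y).
Proof. by move=> x0 y0; rewrite /lg ler_pM2r ?invr_gt0 ?ln2_gt0 // ler_ln. Qed.

Lemma ltr_lg (x y : R) : 0 < x -> 0 < y -> (lg x < lg y) = (x < y).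
Proof. by move=> x0 y0; rewrite /lg ltr_pM2r ?invr_gt0 ?ln2_gt0 // ltr_ln. Qed.

Lemma ler_nat_lg (x : R) (k : nat) : 0 < x -> (k%:R <= lg x) = (2 ^+ k <= x).
Proof. by move=> x0; rewrite -(lg_exp2 k) ler_lg ?exprn_gt0. Qed.

Lemma ltr_nat_lg (x : R) (k : nat) : 0 < x -> (k%:R < lg x) = (2 ^+ k < x).
Proof. by move=> x0; rewrite -(lg_exp2 k) ltr_lg ?exprn_gt0. Qed.

Lemma ltr_lg_nat (x : R) (k : nat) : 0 < x -> (lg x < k%:R) = (x < 2 ^+ k).
Proof. by move=> x0; rewrite !ltNge ler_nat_lg. Qed.

Lemma floor_lg_natr (m : nat) : (0 < m)%N ->
  Num.floor (lg (m%:R : R)) = (trunc_log 2 m)%:Z.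
Proof.
move=> m_gt0; set n := trunc_log 2 m; apply: floor_def.
have m0 : (0 : R) < m%:R by rewrite ltr0n.
rewrite -PoszD addn1 !pmulrn ler_nat_lg ?ltr_lg_nat // -!natrX.
by rewrite ler_nat ltr_nat trunc_logP ?trunc_log_ltn.
Qed.

Lemma ceil_lg_natr (m : nat) : (0 < m)%N -> ~ (exists b, m = (2 ^ b)%N) ->
  Num.ceil (lg (m%:R : R)) = (trunc_log 2 m).+1%:Z.
Proof.
move=> m_gt0 not_pow2; set n := trunc_log 2 m; apply: ceil_def.
have m0 : (0 : R) < m%:R by rewrite ltr0n.
have n_lt_m : (2 ^ n < m)%N.
  by rewrite ltn_neqAle trunc_logP // andbT; apply/eqP => e; apply: not_pow2; exists n.
rewrite -addn1 PoszD addrK !pmulrn ltr_nat_lg // leNgt ltr_nat_lg // -!natrX.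
by rewrite !ltr_nat n_lt_m -leqNgt addn1 ltnW ?trunc_log_ltn.
Qed.

End BinaryLogarithm.

Lemma cvg_add_powR_ratio (R : realType) (c a b : R) : 0 < a -> 0 < b ->
  c + x `^ a / (1 - x `^ b) @[x --> (0 : R)^'+] --> c.
Proof.
move=> a0 b0; rewrite -[X in _ --> X](addr0 c) -[X in _ --> _ + X](mul0r (1 - 0)^-1).
apply: cvgD; first exact: cvg_cst.
apply: cvgM; first exact: powR_cvg0.
apply: cvgV; first by rewrite subr0 oner_neq0.
by apply: cvgB; [exact: cvg_cst | exact: powR_cvg0].
Qed.

Lemma L_cvg (R : realType) (m : nat) : (0 < m)%N ->
  L m x @[x --> (0 : R)^'+] --> (1 + (trunc_log 2 m)%:R : R).
Proof.
move=> m_gt0; have m_half_gt0 : (0 : R) < m%:R / 2 by rewrite divr_gt0 ?ltr0n.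
rewrite /L; case: asboolP => [[b ->]|not_pow2].
  rewrite trunc_expnK // natrX lg_exp2.
  exact: cvg_add_powR_ratio.
rewrite floor_lg_natr // ceil_lg_natr //.
apply: cvg_add_powR_ratio => //.
by rewrite divr_gt0 // subr_gt0 -exprnP -natrX ltr_nat trunc_log_ltn.
Qed.

Theorem lemma5 (R : realType) (m : nat) : (0 < m)%N ->
  exists l1 l2 : R,
    (L m.+1 x @[x --> (0:R)^'+] --> l1) /\
    (L m x @[x --> (0:R)^'+] --> l2) /\
    l2 <= l1.
Proof.
move=> m_gt0; exists (1 + (trunc_log 2 m.+1)%:R), (1 + (trunc_log 2 m)%:R).
split; first exact: L_cvg.
split; first exact: L_cvg.
by rewrite lerD2l ler_nat leq_trunc_log.
Qed.
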